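(* Let $\mathcal{T}_n$ denote the set of trees on $n$ vertices. If $T$ is a maximal tree with respect to $e^{M_2}$ in $\mathcal{T}_n$ (i.e., $e^{M_2}(T)\geq e^{M_2}(T'')$ for all $T''\in\mathcal{T}_n$), then the distance between any pendant vertex and any vertex with the maximum degree in $T$ is at most 2.
   Context: For a tree $G$ with edge set $E(G)$ and vertex degrees $d_G(v)$, the exponential of the second Zagreb index is $e^{M_2}(G)=\sum_{uv\in E(G)} e^{d_G(u)d_G(v)}$. A pendant vertex is a vertex of degree 1. *)

From HB Require Import structures.
From mathcomp Require Import all_boot all_order all_algebra.
From Stdlib Require Import Reals.
From mathcomp Require Import Rstruct.
Set Implicit Arguments. Unset Strict Implicit. Unset Printing Implicit Defensive.
Import GRing.Theory Num.Theory.

Definition simple_graph n (e : rel 'I_n) : Prop :=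
  symmetric e /\ irreflexive e.

(* The edge set: unordered pairs {u,v}, represented as (u,v) with u < v. *)
Definition edges n (e : rel 'I_n) : {set 'I_n * 'I_n} :=
  [set p : 'I_n * 'I_n | (p.1 < p.2)%N && e p.1 p.2].

Definition is_tree n (e : rel 'I_n) : Prop :=
  simple_graph e /\ (forall x y, connect e x y) /\ #|edges e| = n.-1.

Definition deg n (e : rel 'I_n) (v : 'I_n) : nat := #|[set u | e v u]|.

Local Open Scope ring_scope.
Definition eM2 n (e : rel 'I_n) : R :=
  (\sum_(p in edges e) (exp (INR (deg e p.1 * deg e p.2)) : R))%R.

Local Close Scope ring_scope.
Definition dist_le n (e : rel 'I_n) (u v : 'I_n) (k : nat) : Prop :=
  exists s : seq 'I_n, (size s <= k)%N /\ path e u s /\ last u s = v.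

From mathcomp Require Import all_boot all_order all_algebra.
From Stdlib Require Import Reals Lra.
From mathcomp Require Import Rstruct zify.
Set Implicit Arguments. Unset Strict Implicit. Unset Printing Implicit Defensive.
Import Order.TTheory GRing.Theory Num.Theory.

(* If some edge xy has d(x) + d(y) >= n, the d(x) + d(y) - 1 edges at x or y
   leave no room for an edge avoiding {x, y}: the tree is a double star with
   centres x and y, and then every vertex is within distance 2 of every vertex
   of maximum degree.  Otherwise d(x) d(y) <= (n-1)^2/4 on every edge, so
   e^{M_2}(T) <= (n-1) e^{(n-1)^2/4}.  This is beaten by the single central
   edge of the balanced double star, of weight e^{floor(n^2/4)}, because
   floor(n^2/4) >= (n-1)^2/4 + (n-1)/2 and e^{(n-1)/2} > n-1. *)

Section Distance.
Variables (n : nat) (e : rel 'I_n).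

Lemma dist_le_refl u k : dist_le e u u k.
Proof. by exists [::]. Qed.

Lemma dist_le_edge u v k : e u v -> dist_le e u v k.+1.
Proof. by move=> euv; exists [:: v]; rewrite /= euv. Qed.

Lemma dist_le_path2 u w v k : e u w -> e w v -> dist_le e u v k.+2.
Proof. by move=> euw ewv; exists [:: w; v]; rewrite /= euw ewv. Qed.

End Distance.

Lemma connect_neighbour (T : finType) (r : rel T) x y :
  x != y -> connect r x y -> exists z, r x z.
Proof.
move=> xy /connectP [[|z p] /= r_path last_p]; first by rewrite last_p eqxx in xy.
by case/andP: r_path => rxz _; exists z.
Qed.

Section EdgeCounting.
Variables (n : nat) (e : rel 'I_n).
Hypothesis e_simple : simple_graph e.

Definition edge_of (a b : 'I_n) : 'I_n * 'I_n :=
  if (a < b)%N then (a, b) else (b, a).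

Lemma edge_of_eq a b c d :
  edge_of a b = edge_of c d -> (a = c /\ b = d) \/ (a = d /\ b = c).
Proof. by rewrite /edge_of; case: ifP; case: ifP => _ _ [-> ->]; tauto. Qed.

Lemma edge_of_in_edges a b : e a b -> edge_of a b \in edges e.
Proof.
have [e_sym e_irr] := e_simple.
move=> eab; rewrite /edge_of inE; case: ifP => [-> //|/negbT].
have : a != b by apply: contraTneq eab => ->; rewrite e_irr.
rewrite /= e_sym eab andbT -val_eqE /=; lia.
Qed.

Lemma deg_add_le_card_edges x y w z :
  e x y -> e w z -> w \notin [set x; y] -> z \notin [set x; y] ->
  (deg e x + deg e y <= #|edges e|)%N.
Proof.
have [e_sym e_irr] := e_simple.
move=> exy ewz wS zS.
have xy : x != y by apply: contraTneq exy => ->; rewrite e_irr.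
pose edges_at a := [set edge_of a t | t in [set t | e a t]].
have card_edges_at a : #|edges_at a| = deg e a.
  by rewrite card_imset // => t t' /edge_of_eq [[_ ->]|[-> ->]].
have edges_at_sub a : edges_at a \subset edges e.
  by apply/subsetP => _ /imsetP [t + ->]; rewrite inE; apply: edge_of_in_edges.
have card_edges_atI : (#|edges_at x :&: edges_at y| <= 1)%N.
  rewrite -(cards1 (edge_of x y)); apply/subset_leq_card/subsetP => q.
  rewrite in_setI => /andP [/imsetP [t _ ->] /imsetP [s _]].
  by case/edge_of_eq => [[x_y _]|[-> ->]]; [rewrite x_y eqxx in xy | rewrite inE].
have wz_notin : edge_of w z \notin edges_at x :|: edges_at y.
  apply/negP; rewrite in_setU => /orP [] /imsetP [t _] /edge_of_eq.
    by case=> [[w_x _]|[_ z_x]]; rewrite ?w_x ?z_x !inE eqxx in wS zS.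
  by case=> [[w_y _]|[_ z_y]]; rewrite ?w_y ?z_y !inE eqxx ?orbT in wS zS.
have : edge_of w z |: (edges_at x :|: edges_at y) \subset edges e.
  by rewrite subUset sub1set edge_of_in_edges // subUset !edges_at_sub.
move/subset_leq_card; rewrite cardsU1 wz_notin /=.
have := cardsUI (edges_at x) (edges_at y); rewrite !card_edges_at.
set U := #|_ :|: _|; set E := #|edges e|; lia.
Qed.

End EdgeCounting.

(* For a tree this says that it is a double star with centres [x] and [y]. *)
Definition double_star_centres n (e : rel 'I_n) (x y : 'I_n) : Prop :=
  [/\ e x y, forall w z, e w z -> (w \in [set x; y]) || (z \in [set x; y])
    & forall w, w \notin [set x; y] -> e w x || e w y].

Lemma double_star_centresC n (e : rel 'I_n) x y :
  simple_graph e -> double_star_centres e x y -> double_star_centres e y x.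
Proof.
case=> e_sym _ [exy meet adj]; split; first by rewrite e_sym.
  by move=> w z; rewrite setUC; apply: meet.
by move=> w; rewrite setUC orbC; apply: adj.
Qed.

Lemma tree_double_star_centres n (e : rel 'I_n) x y :
  is_tree e -> e x y -> (n.-1 < deg e x + deg e y)%N -> double_star_centres e x y.
Proof.
case=> e_simple [e_conn card_e] exy heavy.
have meet w z : e w z -> (w \in [set x; y]) || (z \in [set x; y]).
  move=> ewz; apply/contraT; rewrite negb_or => /andP [wS zS].
  by have := deg_add_le_card_edges e_simple exy ewz wS zS; rewrite card_e leqNgt heavy.
split=> // w wS.
have wx : w != x by apply: contraNneq wS => ->; rewrite !inE eqxx.
have [z ewz] := connect_neighbour wx (e_conn w x).
by move: (meet w z ewz); rewrite (negbTE wS) !inE /= => /orP [] /eqP <-; rewrite ewz ?orbT.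
Qed.

Section DoubleStarDistance.
Variables (n : nat) (e : rel 'I_n) (x y : 'I_n).
Hypotheses (e_simple : simple_graph e) (centres : double_star_centres e x y).

Lemma dist_le_centre u : dist_le e u x 2.
Proof.
have [e_sym _] := e_simple; case: centres => exy _ adj.
have eyx : e y x by rewrite e_sym.
have [|uS] := boolP (u \in [set x; y]).
  by rewrite !inE => /orP [] /eqP ->; [exact: dist_le_refl | exact: dist_le_edge eyx].
by case/orP: (adj u uS) => [eux|euy]; [exact: dist_le_edge eux | exact: dist_le_path2 euy eyx].
Qed.

Lemma dist_le_off_centres u v :
  v \notin [set x; y] -> e v x -> (forall w, (deg e w <= deg e v)%N) ->
  dist_le e u v 2.
Proof.
have [e_sym _] := e_simple; case: centres => exy meet adj vS evx v_max.
have exv : e x v by rewrite e_sym.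
have eyx : e y x by rewrite e_sym.
have [|uS] := boolP (u \in [set x; y]).
  by rewrite !inE => /orP [] /eqP ->; [exact: dist_le_edge exv | exact: dist_le_path2 eyx exv].
case/orP: (adj u uS) => [eux|euy]; first exact: dist_le_path2 eux exv.
have [evy|nevy] := boolP (e v y); first by apply: dist_le_path2 euy _; rewrite e_sym.
(* Now [v] is a leaf hanging at [x], while [x] has degree at least 2. *)
have nbrs_v : [set t | e v t] \subset [set x].
  apply/subsetP => t; rewrite !inE => evt; move: (meet v t evt).
  rewrite (negbTE vS) !inE /= => /orP [] // /eqP t_y.
  by rewrite -t_y evt in nevy.
have nbrs_x : [set y; v] \subset [set t | e x t].
  by apply/subsetP => t; rewrite !inE => /orP [] /eqP ->.
have yv : y != v by apply: contraNneq vS => <-; rewrite !inE eqxx orbT.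
have := v_max x; rewrite /deg.
have := subset_leq_card nbrs_v; have := subset_leq_card nbrs_x.
rewrite cards1 cards2 yv; lia.
Qed.

End DoubleStarDistance.

Lemma dist_le_max_deg n (e : rel 'I_n) x y u v :
  simple_graph e -> double_star_centres e x y ->
  (forall w, (deg e w <= deg e v)%N) -> dist_le e u v 2.
Proof.
move=> e_simple centres v_max.
have centres' := double_star_centresC e_simple centres.
case: (centres) => _ _ adj.
have [|vS] := boolP (v \in [set x; y]).
  by rewrite !inE => /orP [] /eqP ->; [exact: (dist_le_centre e_simple centres u)
                                     | exact: (dist_le_centre e_simple centres' u)].
case/orP: (adj v vS) => [evx|evy].
  exact: (dist_le_off_centres e_simple centres u vS evx v_max).
rewrite setUC in vS; exact: (dist_le_off_centres e_simple centres' u vS evy v_max).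
Qed.

Section ParentGraph.
Variables (n : nat) (p : 'I_n.+1 -> 'I_n.+1).
Hypothesis p_lt : forall j, j != ord0 -> (p j < j)%N.

Definition parent_graph : rel 'I_n.+1 :=
  fun i j => ((j != ord0) && (i == p j)) || ((i != ord0) && (j == p i)).

Definition children (v : 'I_n.+1) : {set 'I_n.+1} := [set j | (j != ord0) && (p j == v)].

Lemma parent_graph_simple : simple_graph parent_graph.
Proof.
split=> [i j | i]; first by rewrite /parent_graph orbC.
rewrite /parent_graph orbb; apply/negP => /andP [i0 /eqP i_pi].
by have := p_lt i0; rewrite -i_pi ltnn.
Qed.

Lemma connect_parent_graph_ord0 j : connect parent_graph j ord0.
Proof.
elim/ltn_ind: {j}(val j) {-2}j (erefl (val j)) => k IHk j jk.
have [-> | j0] := eqVneq j ord0; first exact: connect0.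
have pj_lt : (p j < k)%N by rewrite -jk p_lt.
apply: connect_trans (IHk _ pj_lt _ erefl).
by apply: connect1; rewrite /parent_graph j0 eqxx orbT.
Qed.

Lemma edges_parent_graph : edges parent_graph = [set (p j, j) | j in [set~ ord0]].
Proof.
apply/setP => [[a b]]; rewrite inE /=; apply/idP/imsetP => [|[j]].
  case/andP=> ab /orP [] /andP [nz /eqP eq].
    by exists b; rewrite ?inE // eq.
  by move: ab; rewrite eq => /(ltn_trans (p_lt nz)); rewrite ltnn.
by rewrite !inE => j0 [-> ->]; rewrite p_lt //= /parent_graph j0 eqxx.
Qed.

Lemma parent_graph_tree : is_tree parent_graph.
Proof.
split; first exact: parent_graph_simple.
split=> [i j | ].
  apply: connect_trans (connect_parent_graph_ord0 i) _.
  rewrite (sym_connect_sym parent_graph_simple.1); exact: connect_parent_graph_ord0.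
rewrite edges_parent_graph card_imset; last by move=> i j [].
by rewrite cardsC1 card_ord.
Qed.

Lemma deg_parent_graph v : (#|children v| + (v != ord0) <= deg parent_graph v)%N.
Proof.
have children_nbrs w : children w \subset [set j | parent_graph w j].
  by apply/subsetP => j; rewrite !inE /parent_graph => /andP [-> /eqP ->]; rewrite eqxx.
have [-> | v0] /= := eqVneq v ord0; first by rewrite addn0 subset_leq_card.
have pv_notin : p v \notin children v.
  rewrite inE; apply/negP => /andP [pv0 /eqP ppv].
  by have := ltn_trans (p_lt pv0) (p_lt v0); rewrite ppv ltnn.
apply: leq_trans (subset_leq_card (_ : p v |: children v \subset _)).
  by rewrite cardsU1 pv_notin addnC.
by rewrite subUset sub1set inE children_nbrs /parent_graph v0 eqxx orbT.
Qed.

End ParentGraph.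

Lemma card_ord_lt N b : (b <= N)%N -> #|[set j : 'I_N | (j < b)%N]| = b.
Proof.
move=> bN; have -> : [set j : 'I_N | (j < b)%N] = widen_ord bN @: [set: 'I_b].
  apply/setP => j; rewrite inE; apply/idP/imsetP => [jb | [i _ ->]]; last exact: (ltn_ord i).
  by exists (Ordinal jb); last apply: val_inj.
by rewrite card_imset ?cardsT ?card_ord // => i i' [] /val_inj.
Qed.

Section BalancedDoubleStar.
Variable m : nat.

Definition second_centre : 'I_m.+2 := Ordinal (isT : (1 < m.+2)%N).

Definition double_star_parent (j : 'I_m.+2) : 'I_m.+2 :=
  if (j <= m.+2 %/ 2)%N then ord0 else second_centre.

Lemma double_star_parent_lt j : j != ord0 -> (double_star_parent j < j)%N.
Proof.
rewrite -val_eqE /= /double_star_parent => j0; case: ifP => /= [_ | /negbT]; lia.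
Qed.

Definition balanced_double_star : rel 'I_m.+2 := parent_graph double_star_parent.

Lemma balanced_double_star_tree : is_tree balanced_double_star.
Proof. exact: parent_graph_tree double_star_parent_lt. Qed.

Lemma centres_in_edges : (ord0, second_centre) \in edges balanced_double_star.
Proof.
have half_gt0 : (0 < m.+2 %/ 2)%N by lia.
by rewrite inE /= /balanced_double_star /parent_graph /double_star_parent /= half_gt0.
Qed.

Lemma deg_balanced_double_star_centres :
  (m.+2 %/ 2 * (m.+2 - m.+2 %/ 2) <=
     deg balanced_double_star ord0 * deg balanced_double_star second_centre)%N.
Proof.
set K := (m.+2 %/ 2)%N; have KN : (K.+1 <= m.+2)%N by rewrite /K; lia.
have := card_ord_lt KN; set A := [set j : 'I_m.+2 | (j < K.+1)%N] => card_A.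
apply: leq_mul.
  apply: leq_trans (deg_parent_graph double_star_parent_lt ord0); rewrite eqxx addn0.
  have : A :\ ord0 \subset children double_star_parent ord0.
    apply/subsetP => j; rewrite !inE /double_star_parent => /andP [-> jK].
    by rewrite -ltnS jK eqxx.
  by move/subset_leq_card; have := cardsD1 ord0 A; rewrite card_A inE /= add1n => -[<-].
apply: leq_trans (deg_parent_graph double_star_parent_lt second_centre).
have : ~: A \subset children double_star_parent second_centre.
  apply/subsetP => j; rewrite !inE ltnS /double_star_parent => jK.
  by rewrite (negbTE jK) eqxx andbT; apply: contraNneq jK => ->.
move/subset_leq_card; have := cardsC A; rewrite card_A card_ord /=.
set C := #|~: A|; set D := #|children _ _|; lia.
Qed.

End BalancedDoubleStar.

Lemma exp_le_exp x y : (x <= y -> exp x <= exp y)%R.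
Proof. by move=> xy; apply: Rnot_lt_le => /exp_lt_inv; lra. Qed.

Lemma exp_gt_double t : (0 <= t -> 2 * t < exp t)%R.
Proof.
move=> t_ge0; have [t_gt0 | <-] := Rle_lt_or_eq_dec _ _ t_ge0; last by rewrite exp_0; lra.
have half_lt : (1 + t / 2 < exp (t / 2))%R by apply: exp_ineq1; lra.
have -> : exp t = (exp (t / 2) * exp (t / 2))%R by rewrite -exp_plus; congr exp; lra.
(* [(1 + t/2)^2 - 2 t = (1 - t/2)^2 >= 0] *)
have := Rle_0_sqr (1 - t / 2); rewrite /Rsqr; nra.
Qed.

Lemma mul_exp_lt_exp (d k : nat) :
  (d * d + 2 * d <= 4 * k)%N -> (INR d * exp (INR (d * d) / 4) < exp (INR k))%R.
Proof.
move=> /ssrnat.leP /le_INR dk; rewrite plus_INR !mult_INR /= in dk.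
have d_lt : (INR d < exp (INR d / 2))%R.
  by have := @exp_gt_double (INR d / 2) ltac:(have := pos_INR d; lra); lra.
have : (exp (INR (d * d) / 4) * exp (INR d / 2) <= exp (INR k))%R.
  by rewrite -exp_plus mult_INR; apply: exp_le_exp; lra.
have := exp_pos (INR (d * d) / 4); nra.
Qed.

Lemma exp_le_eM2 n (e : rel 'I_n) p :
  p \in edges e -> (exp (INR (deg e p.1 * deg e p.2)) <= eM2 e)%R.
Proof.
move=> pe; apply/RleP; rewrite /eM2 (bigD1 p) //= lerDl.
by apply: sumr_ge0 => q _; apply/RleP/Rlt_le/exp_pos.
Qed.

Section SumBound.
Local Open Scope ring_scope.

Lemma eM2_le n (e : rel 'I_n) c :
  (forall p, p \in edges e -> INR (deg e p.1 * deg e p.2) <= c)%R ->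
  (eM2 e <= INR #|edges e| * exp c)%R.
Proof.
move=> prod_le; apply/RleP; apply: (@le_trans _ _ (\sum_(p in edges e) exp c)).
  by apply: ler_sum => p pe; apply/RleP/exp_le_exp/prod_le.
by rewrite sumr_const -mulr_natl INRE.
Qed.

End SumBound.

Lemma eM2_le_of_deg_add n (e : rel 'I_n) d :
  (forall p, p \in edges e -> deg e p.1 + deg e p.2 <= d)%N ->
  (eM2 e <= INR #|edges e| * exp (INR (d * d) / 4))%R.
Proof.
move=> sum_le; apply: eM2_le => p /sum_le p_le.
have : (4 * (deg e p.1 * deg e p.2) <= d * d)%N.
  by apply: leq_trans (nat_AGM2 _ _) _; rewrite -mulnn leq_mul.
by move=> /ssrnat.leP /le_INR; rewrite !mult_INR /=; lra.
Qed.

Lemma balanced_double_star_eM2_gt m :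
  (INR m.+1 * exp (INR (m.+1 * m.+1) / 4) < eM2 (@balanced_double_star m))%R.
Proof.
apply: Rlt_le_trans (exp_le_eM2 (@centres_in_edges m)); apply: mul_exp_lt_exp => /=.
have := @deg_balanced_double_star_centres m; nia.
Qed.

Theorem lemma1 (n : nat) (e : rel 'I_n) :
  is_tree e ->
  (forall e' : rel 'I_n, is_tree e' -> (eM2 e' <= eM2 e)%R) ->
  forall u v : 'I_n,
    deg e u = 1%N ->
    (forall w : 'I_n, (deg e w <= deg e v)%N) ->
    dist_le e u v 2.
Proof.
(* The conclusion holds for every vertex [u], pendant or not. *)
case: n e => [|[|m]] e e_tree e_max u v _ v_max; first by case: u.
  by rewrite (ord1 u) (ord1 v); apply: dist_le_refl.
have [/existsP [[x y] /andP [xy_edge heavy]] | light] :=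
  boolP [exists p in edges e, (m.+1 < deg e p.1 + deg e p.2)%N].
  have exy : e x y by move: xy_edge; rewrite inE => /andP [].
  exact: (dist_le_max_deg u e_tree.1 (tree_double_star_centres e_tree exy heavy) v_max).
exfalso.
have deg_add_le p : p \in edges e -> (deg e p.1 + deg e p.2 <= m.+1)%N.
  by move=> pe; move/existsPn: light => /(_ p); rewrite pe -leqNgt.
have card_e : #|edges e| = m.+1 := e_tree.2.2.
have eM2_e_le := eM2_le_of_deg_add deg_add_le; rewrite card_e in eM2_e_le.
have star_le_e := e_max _ (@balanced_double_star_tree m).
have star_gt := balanced_double_star_eM2_gt m; lra.
Qed.
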